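(* Let $0<a$ and let $\mathbf v_c=(v_{c1},v_{c2},v_{c3},v_{c4})$ satisfy $a\le v_{c1}\le v_{c2}\le v_{c3}\le v_{c4}<\infty$. Let $\mathbf p_c=(p_{c1},p_{c2},p_{c3},p_{c4})$ be the unique maximizer of $L_{\mathbf v_c}$ over the simplex $\Delta$. For $\mathbf v_t\in[a,\infty)^4$ put $$R(\mathbf v_t,\mathbf v_c)=1-\left(\frac{L_{\mathbf v_t}(\mathbf p_c)}{\max_{\mathbf p\in\Delta}L_{\mathbf v_t}(\mathbf p)}\right)^{1/3},$$ and $R_{\max}(c)=\sup_{\mathbf v_t\in[a,\infty)^4}R(\mathbf v_t,\mathbf v_c)$. (i) If $v_{c4}\ge v_{c1}+v_{c2}+v_{c3}$, then $R_{\max}(c)=1$. (ii) If $v_{c4}<v_{c1}+v_{c2}+v_{c3}$, then $R_{\max}(c)=1-3\,(p_{c2}p_{c3}p_{c4})^{1/3}$.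
   Context: Setting: a $2^2$ experiment with binary response under a generalized linear model with main-effects linear predictor $\eta=\beta_0+\beta_1x_1+\beta_2x_2$. A design is a vector $\mathbf p=(p_1,p_2,p_3,p_4)$ in the simplex $\Delta=\{p_i\ge0,\ \sum_i p_i=1\}$. With $w_i>0$ the GLM weights at the four design points and $v_i=1/w_i$, the $D$-criterion equals $16w_1w_2w_3w_4L_{\mathbf v}(\mathbf p)$ where $$L_{\mathbf v}(\mathbf p)=v_4p_1p_2p_3+v_3p_1p_2p_4+v_2p_1p_3p_4+v_1p_2p_3p_4 .$$ For every $\mathbf v$ with positive entries, $L_{\mathbf v}$ has a unique maximizer on $\Delta$. $\mathbf v_c$ is the assumed value, $\mathbf v_t$ the true value, and $R$ the relative loss of efficiency. *)

From Stdlib Require Import Reals Lra.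
Open Scope R_scope.

(* A vector of R^4, used both for designs p and for v = (1/w_i). *)
Record vec4 := mk4 { x1 : R; x2 : R; x3 : R; x4 : R }.

Definition in_simplex (p : vec4) : Prop :=
  0 <= x1 p /\ 0 <= x2 p /\ 0 <= x3 p /\ 0 <= x4 p /\
  x1 p + x2 p + x3 p + x4 p = 1.

Definition Lv (v p : vec4) : R :=
  x4 v * x1 p * x2 p * x3 p + x3 v * x1 p * x2 p * x4 p
  + x2 v * x1 p * x3 p * x4 p + x1 v * x2 p * x3 p * x4 p.

Definition is_maximizer (v p : vec4) : Prop :=
  in_simplex p /\ forall q, in_simplex q -> Lv v q <= Lv v p.

Definition is_max_value (v : vec4) (M : R) : Prop :=
  (exists p, in_simplex p /\ Lv v p = M) /\
  (forall q, in_simplex q -> Lv v q <= M).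

Definition cbrt (x : R) : R :=
  if Rle_dec x 0 then 0 else Rpower x (/ 3).

(* r = R(v_t, v_c) = 1 - (L_{v_t}(p_c) / max_Delta L_{v_t})^(1/3),
   where p_c is the maximizer of L_{v_c}. *)
Definition loss_value (vt pc : vec4) (r : R) : Prop :=
  exists M, is_max_value vt M /\ r = 1 - cbrt (Lv vt pc / M).

Definition in_box (a : R) (v : vec4) : Prop :=
  a <= x1 v /\ a <= x2 v /\ a <= x3 v /\ a <= x4 v.

(* The set { R(v_t, v_c) | v_t in [a,oo)^4 }; its supremum is R_max(c). *)
Definition loss_set (a : R) (pc : vec4) (r : R) : Prop :=
  exists vt, in_box a vt /\ loss_value vt pc r.

(* Write c = p2 p3 p4 for the assumed optimal design.  When c is the
   smallest of the four triple products of p_c, every L_{v_t}(p_c) is at least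
   c (v1 + v2 + v3 + v4), while AM-GM gives max L_{v_t} <= (v1 + v2 + v3 + v4)/27,
   so R <= 1 - 3 c^(1/3); the bound is approached by v_t = (t, a, a, a) with
   t -> oo, whose optimum is the face design (0, 1/3, 1/3, 1/3).
   If v4 >= v1 + v2 + v3 the optimum of L_{v_c} is the face design
   (1/3, 1/3, 1/3, 0), so c = 0 and R_max = 1.  Otherwise the optimum is interior
   (some design beats the face value v4/27), and averaging p1 with p_j shows
   p1 >= p_j, so c is indeed the smallest triple product. *)
From Stdlib Require Import Reals Lra Psatz.
Open Scope R_scope.

Lemma cbrt_0 : cbrt 0 = 0.
Proof. unfold cbrt; destruct (Rle_dec 0 0); lra. Qed.

Lemma cbrt_ge0 x : 0 <= cbrt x.
Proof.
  unfold cbrt; destruct (Rle_dec x 0); [lra|].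
  left; apply exp_pos.
Qed.

Lemma pow3_cbrt x : 0 <= x -> cbrt x ^ 3 = x.
Proof.
  intros Hx; unfold cbrt; destruct (Rle_dec x 0); [simpl; lra|].
  rewrite <- Rpower_pow by apply exp_pos.
  rewrite Rpower_mult; replace (/ 3 * INR 3) with 1 by (simpl; field).
  apply Rpower_1; lra.
Qed.

Lemma cbrt_le x y : 0 <= x -> x <= y -> cbrt x <= cbrt y.
Proof.
  intros Hx Hxy; unfold cbrt.
  destruct (Rle_dec x 0), (Rle_dec y 0); try lra.
  - left; apply exp_pos.
  - apply Rle_Rpower_l; lra.
Qed.

Lemma cbrt_pow3 y : 0 <= y -> cbrt (y ^ 3) = y.
Proof.
  intros Hy; destruct (Req_dec y 0) as [->|Hy0].
  - replace (0 ^ 3) with 0 by ring; apply cbrt_0.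
  - assert (Hpos : 0 < y) by lra.
    unfold cbrt; destruct (Rle_dec (y ^ 3) 0) as [Hle|_].
    + pose proof (pow_lt y 3 Hpos); lra.
    + rewrite <- Rpower_pow by assumption.
      rewrite Rpower_mult; replace (INR 3 * / 3) with 1 by (simpl; field).
      apply Rpower_1; assumption.
Qed.

Lemma cbrt_le_pow3 x w : 0 <= x -> 0 <= w -> x <= w ^ 3 -> cbrt x <= w.
Proof.
  intros Hx Hw Hxw; rewrite <- (cbrt_pow3 w Hw); apply cbrt_le; assumption.
Qed.

Lemma pow3_le_cbrt x w : 0 <= w -> w ^ 3 <= x -> w <= cbrt x.
Proof.
  intros Hw Hwx; rewrite <- (cbrt_pow3 w Hw).
  apply cbrt_le; [apply pow_le|]; assumption.
Qed.

Lemma is_lub_of_approx (E : R -> Prop) m :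
  is_upper_bound E m -> (forall d, 0 < d -> exists r, E r /\ m - d <= r) ->
  is_lub E m.
Proof.
  intros Hub Happrox; split; [exact Hub|].
  intros b Hb; apply Rnot_lt_le; intros Hbm.
  destruct (Happrox ((m - b) / 2)) as [r [Er Hr]]; [lra|].
  specialize (Hb r Er); lra.
Qed.

(* From x y <= ((1 - z)/2)^2; the gap is 1/27 - ((1 - z)/2)^2 z. *)
Lemma amgm3_gap x y z : 0 <= x -> 0 <= y -> 0 <= z -> x + y + z = 1 ->
  x * y * z + (3 * z - 1) ^ 2 * (4 - 3 * z) / 108 <= 1 / 27.
Proof.
  intros Hx Hy Hz Hs.
  assert (Hxy : x * y <= ((1 - z) / 2) ^ 2).
  { replace (1 - z) with (x + y) by lra; pose proof (pow2_ge_0 (x - y)); nra. }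
  assert (x * y * z <= ((1 - z) / 2) ^ 2 * z) by (apply Rmult_le_compat_r; lra).
  replace (1 / 27) with (((1 - z) / 2) ^ 2 * z + (3 * z - 1) ^ 2 * (4 - 3 * z) / 108)
    by field.
  lra.
Qed.

Lemma amgm3 x y z : 0 <= x -> 0 <= y -> 0 <= z -> x + y + z <= 1 ->
  x * y * z <= 1 / 27.
Proof.
  intros Hx Hy Hz Hs.
  assert (x * y * z <= x * y * (1 - x - y)) by (apply Rmult_le_compat_l; nra).
  pose proof (amgm3_gap x y (1 - x - y) Hx Hy ltac:(lra) ltac:(lra)).
  assert (0 <= (3 * (1 - x - y) - 1) ^ 2 * (4 - 3 * (1 - x - y)))
    by (apply Rmult_le_pos; [apply pow2_ge_0 | lra]).
  lra.
Qed.

Lemma amgm3_eq x y z : 0 <= x -> 0 <= y -> 0 <= z -> x + y + z = 1 ->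
  x * y * z = 1 / 27 -> z = 1 / 3.
Proof.
  intros Hx Hy Hz Hs Heq.
  pose proof (amgm3_gap x y z Hx Hy Hz Hs).
  assert (Hsq : (3 * z - 1) ^ 2 * (4 - 3 * z) <= 0) by lra.
  assert (Hsq0 : (3 * z - 1) ^ 2 <= 0).
  { apply Rnot_lt_le; intros Hlt.
    assert (0 < (3 * z - 1) ^ 2 * (4 - 3 * z)) by (apply Rmult_lt_0_compat; lra).
    lra. }
  nra.
Qed.

Lemma Lv_le_sum v q :
  0 <= x1 v -> 0 <= x2 v -> 0 <= x3 v -> 0 <= x4 v -> in_simplex q ->
  Lv v q <= (x1 v + x2 v + x3 v + x4 v) / 27.
Proof.
  destruct v as [v1 v2 v3 v4], q as [q1 q2 q3 q4]; unfold in_simplex, Lv; simpl.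
  intros h1 h2 h3 h4 (g1 & g2 & g3 & g4 & gs).
  pose proof (amgm3 q2 q3 q4 g2 g3 g4 ltac:(lra)).
  pose proof (amgm3 q1 q3 q4 g1 g3 g4 ltac:(lra)).
  pose proof (amgm3 q1 q2 q4 g1 g2 g4 ltac:(lra)).
  pose proof (amgm3 q1 q2 q3 g1 g2 g3 ltac:(lra)).
  nra.
Qed.

Lemma Lv_ge_min_triple v p c :
  0 <= x1 v -> 0 <= x2 v -> 0 <= x3 v -> 0 <= x4 v ->
  c <= x2 p * x3 p * x4 p -> c <= x1 p * x3 p * x4 p ->
  c <= x1 p * x2 p * x4 p -> c <= x1 p * x2 p * x3 p ->
  c * (x1 v + x2 v + x3 v + x4 v) <= Lv v p.
Proof. unfold Lv; intros; nra. Qed.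

(* Regrouping L_v(q) as (v1 - v2 - v3 - v4) q2 q3 q4 + v2 q3 q4 (q1 + q2)
   + v3 q2 q4 (q1 + q3) + v4 q2 q3 (q1 + q4) makes every term a scaled
   product of three numbers summing to 1. *)
Lemma Lv_dominant1_le v q :
  0 <= x2 v -> 0 <= x3 v -> 0 <= x4 v -> x2 v + x3 v + x4 v <= x1 v ->
  in_simplex q -> Lv v q <= x1 v / 27.
Proof.
  destruct v as [v1 v2 v3 v4], q as [q1 q2 q3 q4]; unfold in_simplex, Lv; simpl.
  intros h2 h3 h4 hs (g1 & g2 & g3 & g4 & gs).
  pose proof (amgm3 q2 q3 q4 g2 g3 g4 ltac:(lra)).
  pose proof (amgm3 q3 q4 (q1 + q2) g3 g4 ltac:(lra) ltac:(lra)).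
  pose proof (amgm3 q2 q4 (q1 + q3) g2 g4 ltac:(lra) ltac:(lra)).
  pose proof (amgm3 q2 q3 (q1 + q4) g2 g3 ltac:(lra) ltac:(lra)).
  nra.
Qed.

Lemma Lv_dominant1_eq v q :
  0 < x2 v -> 0 < x3 v -> 0 <= x4 v -> x2 v + x3 v + x4 v <= x1 v ->
  in_simplex q -> x1 v / 27 <= Lv v q -> x1 q = 0.
Proof.
  destruct v as [v1 v2 v3 v4], q as [q1 q2 q3 q4]; unfold in_simplex, Lv; simpl.
  intros h2 h3 h4 hs (g1 & g2 & g3 & g4 & gs) Hge.
  pose proof (amgm3 q2 q3 q4 g2 g3 g4 ltac:(lra)).
  pose proof (amgm3 q3 q4 (q1 + q2) g3 g4 ltac:(lra) ltac:(lra)).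
  pose proof (amgm3 q2 q4 (q1 + q3) g2 g4 ltac:(lra) ltac:(lra)).
  pose proof (amgm3 q2 q3 (q1 + q4) g2 g3 ltac:(lra) ltac:(lra)).
  assert (E2 : q3 * q4 * (q1 + q2) = 1 / 27) by nra.
  assert (E3 : q2 * q4 * (q1 + q3) = 1 / 27) by nra.
  assert (Q2 : q2 = 1 / 3) by (apply (amgm3_eq q4 (q1 + q3) q2); lra).
  assert (Q3 : q3 = 1 / 3) by (apply (amgm3_eq q4 (q1 + q2) q3); lra).
  assert (Q4 : q4 = 1 / 3) by (apply (amgm3_eq q3 (q1 + q2) q4); lra).
  lra.
Qed.

Lemma max_value_dominant1 v :
  0 <= x2 v -> 0 <= x3 v -> 0 <= x4 v -> x2 v + x3 v + x4 v <= x1 v ->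
  is_max_value v (x1 v / 27).
Proof.
  intros h2 h3 h4 hs; split.
  - exists (mk4 0 (1 / 3) (1 / 3) (1 / 3)); split.
    + unfold in_simplex; simpl; lra.
    + unfold Lv; simpl; field.
  - intros q Hq; apply Lv_dominant1_le; assumption.
Qed.

Definition swap14 (v : vec4) : vec4 := mk4 (x4 v) (x2 v) (x3 v) (x1 v).

Lemma Lv_swap14 v p : Lv (swap14 v) (swap14 p) = Lv v p.
Proof. unfold Lv, swap14; simpl; ring. Qed.

Lemma in_simplex_swap14 p : in_simplex p -> in_simplex (swap14 p).
Proof. unfold in_simplex, swap14; simpl; lra. Qed.

Lemma maximizer_dominant4 v p :
  0 <= x1 v -> 0 < x2 v -> 0 < x3 v -> x1 v + x2 v + x3 v <= x4 v ->
  is_maximizer v p -> x4 p = 0.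
Proof.
  intros h1 h2 h3 hs [Hp Hmax].
  assert (Hface : x4 v / 27 <= Lv v p).
  { replace (x4 v / 27) with (Lv v (mk4 (1 / 3) (1 / 3) (1 / 3) 0))
      by (unfold Lv; simpl; field).
    apply Hmax; unfold in_simplex; simpl; lra. }
  apply (Lv_dominant1_eq (swap14 v) (swap14 p)); simpl; try lra.
  - apply in_simplex_swap14; assumption.
  - rewrite Lv_swap14; assumption.
Qed.

Lemma Lv_boundary_le v p :
  0 <= x1 v -> x1 v <= x2 v -> x2 v <= x3 v -> x3 v <= x4 v -> in_simplex p ->
  x1 p * x2 p * x3 p * x4 p = 0 -> Lv v p <= x4 v / 27.
Proof.
  destruct v as [v1 v2 v3 v4], p as [p1 p2 p3 p4]; unfold in_simplex, Lv; simpl.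
  intros h1 h12 h23 h34 (g1 & g2 & g3 & g4 & gs) Hzero.
  pose proof (amgm3 p2 p3 p4 g2 g3 g4 ltac:(lra)).
  pose proof (amgm3 p1 p3 p4 g1 g3 g4 ltac:(lra)).
  pose proof (amgm3 p1 p2 p4 g1 g2 g4 ltac:(lra)).
  pose proof (amgm3 p1 p2 p3 g1 g2 g3 ltac:(lra)).
  repeat match goal with
         | H : _ * _ = 0 |- _ => apply Rmult_integral in H; destruct H as [H|H]
         end; subst; nra.
Qed.

(* The design ((1 - e)/3, (1 - e)/3, (1 - e)/3, e) with
   e = D / (2 D + 8 v4), D = v1 + v2 + v3 - v4, satisfies
   27 L_v - v4 = e (3 D (1 - e)^2 - v4 e (3 - 2 e)) > 0. *)
Lemma Lv_exceeds_face v :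
  0 < x4 v -> x4 v < x1 v + x2 v + x3 v ->
  exists q, in_simplex q /\ x4 v / 27 < Lv v q.
Proof.
  destruct v as [v1 v2 v3 v4]; simpl; intros h4 hs.
  set (D := v1 + v2 + v3 - v4).
  assert (HD : 0 < D) by (unfold D; lra).
  set (e := D / (2 * D + 8 * v4)).
  assert (He0 : 0 < e) by (apply Rdiv_lt_0_compat; lra).
  assert (He1 : e <= 1 / 2).
  { unfold e; apply Rmult_le_reg_r with (2 * D + 8 * v4); [lra|].
    field_simplify; lra. }
  assert (He2 : 8 * v4 * e <= D).
  { unfold e; apply Rmult_le_reg_r with (2 * D + 8 * v4); [lra|].
    field_simplify; nra. }
  exists (mk4 ((1 - e) / 3) ((1 - e) / 3) ((1 - e) / 3) e); split.
  - unfold in_simplex; simpl; lra.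
  - unfold Lv; simpl.
    assert (Hid : 27 * (v4 * ((1 - e) / 3) * ((1 - e) / 3) * ((1 - e) / 3)
       + v3 * ((1 - e) / 3) * ((1 - e) / 3) * e + v2 * ((1 - e) / 3) * ((1 - e) / 3) * e
       + v1 * ((1 - e) / 3) * ((1 - e) / 3) * e) - v4
       = e * (3 * D * (1 - e) ^ 2 - v4 * e * (3 - 2 * e))) by (unfold D; field).
    assert (3 * D / 4 <= 3 * D * (1 - e) ^ 2) by (assert (1 / 4 <= (1 - e) ^ 2) by nra; nra).
    assert (v4 * e * (3 - 2 * e) <= 3 * D / 8) by nra.
    assert (0 < e * (3 * D * (1 - e) ^ 2 - v4 * e * (3 - 2 * e)))
      by (apply Rmult_lt_0_compat; lra).
    lra.
Qed.

Lemma maximizer_interior v p :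
  0 < x1 v -> x1 v <= x2 v -> x2 v <= x3 v -> x3 v <= x4 v ->
  x4 v < x1 v + x2 v + x3 v -> is_maximizer v p ->
  0 < x1 p /\ 0 < x2 p /\ 0 < x3 p /\ 0 < x4 p.
Proof.
  intros h1 h12 h23 h34 hs [Hp Hmax].
  assert (Hprod : x1 p * x2 p * x3 p * x4 p <> 0).
  { intros Hzero.
    destruct (Lv_exceeds_face v) as [q [Hq Hlt]]; try lra.
    pose proof (Hmax q Hq).
    pose proof (Lv_boundary_le v p ltac:(lra) h12 h23 h34 Hp Hzero).
    lra. }
  destruct Hp as (g1 & g2 & g3 & g4 & _).
  repeat split; apply Rnot_le_lt; intros Hle; apply Hprod;
    match goal with H : ?x <= 0 |- _ => replace x with 0 by lra end; ring.
Qed.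

(* If x < y, moving both to their mean changes A x y + B x + C y by
   A ((y - x)/2)^2 + (B - C)(y - x)/2. *)
Lemma midpoint_increases A B C x y :
  0 < A -> C <= B -> x < y ->
  A * x * y + B * x + C * y < A * ((x + y) / 2) * ((x + y) / 2) + (B + C) * ((x + y) / 2).
Proof.
  intros HA HBC Hxy.
  assert (0 < A * ((y - x) / 2) ^ 2) by (apply Rmult_lt_0_compat; [|apply pow_lt]; lra).
  nra.
Qed.

(* For j = 2, 3, 4, L_v is of the form A p1 pj + B p1 + C pj with B = v_j (...),
   C = v1 (...), so averaging p1 and pj would improve a design with pj > p1. *)
Lemma maximizer_first_largest v p :
  0 < x1 v -> x1 v <= x2 v -> x1 v <= x3 v -> x1 v <= x4 v ->
  0 < x1 p -> 0 < x2 p -> 0 < x3 p -> 0 < x4 p -> is_maximizer v p ->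
  x2 p <= x1 p /\ x3 p <= x1 p /\ x4 p <= x1 p.
Proof.
  destruct v as [v1 v2 v3 v4], p as [p1 p2 p3 p4]; unfold is_maximizer, in_simplex, Lv;
    simpl.
  intros h1 h2 h3 h4 g1 g2 g3 g4 [(_ & _ & _ & _ & gs) Hmax].
  repeat split; apply Rnot_lt_le; intros Hlt.
  - assert (HA : 0 < v4 * p3 + v3 * p4) by nra.
    assert (HBC : v1 * p3 * p4 <= v2 * p3 * p4)
      by (apply Rmult_le_compat_r; [lra|]; apply Rmult_le_compat_r; lra).
    pose proof (Hmax (mk4 ((p1 + p2) / 2) ((p1 + p2) / 2) p3 p4)) as Hm; simpl in Hm.
    pose proof (midpoint_increases _ _ _ p1 p2 HA HBC Hlt).
    specialize (Hm ltac:(repeat split; lra)); lra.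
  - assert (HA : 0 < v4 * p2 + v2 * p4) by nra.
    assert (HBC : v1 * p2 * p4 <= v3 * p2 * p4)
      by (apply Rmult_le_compat_r; [lra|]; apply Rmult_le_compat_r; lra).
    pose proof (Hmax (mk4 ((p1 + p3) / 2) p2 ((p1 + p3) / 2) p4)) as Hm; simpl in Hm.
    pose proof (midpoint_increases _ _ _ p1 p3 HA HBC Hlt).
    specialize (Hm ltac:(repeat split; lra)); lra.
  - assert (HA : 0 < v3 * p2 + v2 * p3) by nra.
    assert (HBC : v1 * p2 * p3 <= v4 * p2 * p3)
      by (apply Rmult_le_compat_r; [lra|]; apply Rmult_le_compat_r; lra).
    pose proof (Hmax (mk4 ((p1 + p4) / 2) p2 p3 ((p1 + p4) / 2))) as Hm; simpl in Hm.
    pose proof (midpoint_increases _ _ _ p1 p4 HA HBC Hlt).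
    specialize (Hm ltac:(repeat split; lra)); lra.
Qed.

Lemma loss_le_min_triple a pc r :
  0 < a -> in_simplex pc ->
  x2 pc * x3 pc * x4 pc <= x1 pc * x3 pc * x4 pc ->
  x2 pc * x3 pc * x4 pc <= x1 pc * x2 pc * x4 pc ->
  x2 pc * x3 pc * x4 pc <= x1 pc * x2 pc * x3 pc ->
  loss_set a pc r -> r <= 1 - 3 * cbrt (x2 pc * x3 pc * x4 pc).
Proof.
  intros Ha Hpc h1 h2 h3 (vt & (b1 & b2 & b3 & b4) & M & [[p [Hp HpM]] HM] & ->).
  set (c := x2 pc * x3 pc * x4 pc) in *.
  set (S := x1 vt + x2 vt + x3 vt + x4 vt).
  assert (Hc : 0 <= c) by (destruct Hpc as (g1 & g2 & g3 & g4 & _); unfold c; repeat apply Rmult_le_pos; assumption).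
  assert (HMpos : 0 < M).
  { specialize (HM (mk4 (1 / 4) (1 / 4) (1 / 4) (1 / 4))).
    unfold in_simplex, Lv in HM; simpl in HM; nra. }
  assert (HMS : M <= S / 27) by (rewrite <- HpM; apply Lv_le_sum; try assumption; lra).
  assert (HLS : c * S <= Lv vt pc) by (apply Lv_ge_min_triple; try apply Rle_refl; try assumption; lra).
  assert (Hratio : (3 * cbrt c) ^ 3 <= Lv vt pc / M).
  { rewrite Rpow_mult_distr, pow3_cbrt by assumption.
    apply (Rmult_le_reg_r M); [assumption|].
    replace (Lv vt pc / M * M) with (Lv vt pc) by (field; lra).
    nra. }
  pose proof (cbrt_ge0 c).
  pose proof (pow3_le_cbrt (Lv vt pc / M) (3 * cbrt c) ltac:(lra) Hratio).
  lra.
Qed.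

(* The witnesses are v_t = (t, a, a, a), for which
   L_{v_t}(p_c) / max L_{v_t} = 27 c + 27 a K / t. *)
Lemma loss_set_approaches a pc d :
  0 < a -> in_simplex pc -> 0 < d ->
  exists r, loss_set a pc r /\ 1 - 3 * cbrt (x2 pc * x3 pc * x4 pc) - d <= r.
Proof.
  intros Ha (g1 & g2 & g3 & g4 & _) Hd.
  set (c := x2 pc * x3 pc * x4 pc).
  set (K := x1 pc * x3 pc * x4 pc + x1 pc * x2 pc * x4 pc + x1 pc * x2 pc * x3 pc).
  assert (Hc : 0 <= c) by (unfold c; repeat apply Rmult_le_pos; assumption).
  assert (HK : 0 <= K)
    by (unfold K; repeat (apply Rplus_le_le_0_compat || apply Rmult_le_pos); assumption).
  assert (Hd3 : 0 < d ^ 3) by (apply pow_lt; assumption).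
  set (t := 3 * a + 27 * a * K / d ^ 3).
  assert (Ht : 3 * a <= t).
  { unfold t; assert (0 <= 27 * a * K / d ^ 3)
      by (apply Rmult_le_pos; [nra | left; apply Rinv_0_lt_compat; assumption]).
    lra. }
  set (vt := mk4 t a a a).
  exists (1 - cbrt (Lv vt pc / (t / 27))); split.
  - exists vt; split; [unfold in_box, vt; simpl; lra|].
    exists (t / 27); split; [|reflexivity].
    apply max_value_dominant1; unfold vt; simpl; lra.
  - assert (Hratio : Lv vt pc / (t / 27) = 27 * c + 27 * a * K / t)
      by (unfold Lv, vt, c, K; simpl; field; lra).
    assert (Htail : 27 * a * K / t <= d ^ 3).
    { apply (Rmult_le_reg_r t); [lra|].
      replace (27 * a * K / t * t) with (27 * a * K) by (field; lra).
      unfold t; replace (d ^ 3 * (3 * a + 27 * a * K / d ^ 3))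
        with (3 * a * d ^ 3 + 27 * a * K) by (field; lra).
      nra. }
    assert (Hnum : 0 <= 27 * a * K / t)
      by (apply Rmult_le_pos; [nra | left; apply Rinv_0_lt_compat; lra]).
    pose proof (cbrt_ge0 c) as Hs.
    assert (Hle : Lv vt pc / (t / 27) <= (3 * cbrt c + d) ^ 3).
    { rewrite Hratio; replace 27 with (3 ^ 3) at 1 by ring.
      rewrite <- (pow3_cbrt c Hc) at 1; nra. }
    assert (Hr0 : 0 <= Lv vt pc / (t / 27)) by (rewrite Hratio; lra).
    pose proof (cbrt_le_pow3 _ (3 * cbrt c + d) Hr0 ltac:(lra) Hle).
    lra.
Qed.

Lemma loss_set_lub a pc :
  0 < a -> in_simplex pc ->
  x2 pc * x3 pc * x4 pc <= x1 pc * x3 pc * x4 pc ->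
  x2 pc * x3 pc * x4 pc <= x1 pc * x2 pc * x4 pc ->
  x2 pc * x3 pc * x4 pc <= x1 pc * x2 pc * x3 pc ->
  is_lub (loss_set a pc) (1 - 3 * cbrt (x2 pc * x3 pc * x4 pc)).
Proof.
  intros Ha Hpc h1 h2 h3; apply is_lub_of_approx.
  - intros r; apply loss_le_min_triple; assumption.
  - intros d Hd; apply loss_set_approaches; assumption.
Qed.

Theorem corollary3 (a : R) (vc pc : vec4) :
  0 < a ->
  a <= x1 vc -> x1 vc <= x2 vc -> x2 vc <= x3 vc -> x3 vc <= x4 vc ->
  is_maximizer vc pc ->
  (x1 vc + x2 vc + x3 vc <= x4 vc -> is_lub (loss_set a pc) 1) /\
  (x4 vc < x1 vc + x2 vc + x3 vc ->
     is_lub (loss_set a pc) (1 - 3 * cbrt (x2 pc * x3 pc * x4 pc))).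
Proof.
  intros Ha h1 h12 h23 h34 Hmax.
  pose proof (proj1 Hmax) as Hpc.
  pose proof Hpc as (g1 & g2 & g3 & g4 & _).
  split; intros Hcase.
  - assert (Hp4 : x4 pc = 0) by (apply (maximizer_dominant4 vc); auto; lra).
    replace 1 with (1 - 3 * cbrt (x2 pc * x3 pc * x4 pc))
      by (rewrite Hp4, Rmult_0_r, cbrt_0; ring).
    apply loss_set_lub; try assumption; rewrite Hp4, !Rmult_0_r;
      repeat apply Rmult_le_pos; lra.
  - destruct (maximizer_interior vc pc) as (P1 & P2 & P3 & P4); try (assumption || lra).
    destruct (maximizer_first_largest vc pc) as (S2 & S3 & S4); try (assumption || lra).
    assert (0 < x3 pc * x4 pc) by nra.
    assert (0 < x2 pc * x4 pc) by nra.
    assert (0 < x2 pc * x3 pc) by nra.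
    apply loss_set_lub; try assumption; nra.
Qed.
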